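(* Let $f$, $\mathcal{X}$, $D_0$, $f^*$, $\epsilon$, $R_\epsilon$, $M$ and DFDS be as in the context. Let $x^*\in\mathcal{X}$ be a global minimizer of $f$ over $\mathcal{X}$ and let $x_k\in\mathcal{X}_{R_\epsilon}$ with $x_k\notin\mathcal{X}^*_{R_\epsilon}$ (so that $\|x^*-x_k\|>R_\epsilon$). Define $\alpha=\arcsin\frac{\sqrt{3}R_\epsilon}{2\|x^*-x_k\|}$ and $\mathcal{S}^{N-1}_\alpha=\{d\in\mathcal{S}^{N-1}: \angle(x^*-x_k,d)\le\alpha\}$, where $\angle(u,v)\in[0,\pi]$ denotes the angle between vectors $u,v$. Then: 1. $\frac{\sqrt{3}R_\epsilon}{2(D_0+R_\epsilon)}\le\sin\alpha<\frac{\sqrt{3}}{2}$, equivalently $\arcsin\!\big(\frac{\sqrt{3}R_\epsilon}{2(D_0+R_\epsilon)}\big)\le\alpha<\frac{\pi}{3}$. 2. For every $d\in\mathcal{S}^{N-1}_\alpha$, the ray $\{x_k+td: t\ge 0\}$ intersects $\overline{\mathcal{B}}(x^*,R_\epsilon)$ in a segment (chord) of length at least $R_\epsilon$. 3. If $x_k$ is the current iteration point of DFDS and some direction $d_m$ generated at $x_k$ lies in $\mathcal{S}^{N-1}_\alpha$, then the directional search at $x_k$ finds, with certainty, a point $y$ with $f(y)\le f(x_k)-\epsilon/3$.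
   Context: $f$ is continuous and real-valued; $\mathcal{X}\subset\mathbb{R}^N$ is compact and convex with diameter $D_0$; $f^*=\min_{x\in\mathcal{X}}f(x)$. For $R>0$, $\mathcal{X}_R=\{x\in\mathbb{R}^N:\min_{s\in\mathcal{X}}\|x-s\|\le R\}$; $\overline{\mathcal{B}}(x,R)$ is the closed Euclidean ball; $\mathcal{S}^{N-1}$ is the unit sphere. Standing assumption: for the given $\epsilon>0$, $R_\epsilon>0$ is such that $f$ is well-defined on $\mathcal{X}_{R_\epsilon}$ and for every $x\in\mathcal{X}_{R_\epsilon}$ with $f(x)\le f^*+\epsilon$ one has $f(y)\le f(x)+\epsilon/3$ for all $y\in\overline{\mathcal{B}}(x,R_\epsilon)\cap\mathcal{X}_{R_\epsilon}$. $\mathcal{X}^*_{R_\epsilon}=\{x\in\mathcal{X}_{R_\epsilon}: f(x)\le f^*+\frac{2\epsilon}{3}\}$. DFDS (inputs $R_\epsilon$, integer $M\ge1$, $\epsilon$): Step 0: choose $x_0\in\mathcal{X}$, set $k=0$, $m=0$. Step 1: if $m\ge M$ go to Step 3; otherwise draw $d_m$ uniformly on $\mathcal{S}^{N-1}$ and set $r=R_\epsilon$. Step 2: if $x_k+rd_m\notin\mathcal{X}_{R_\epsilon}$, set $m=m+1$ and go to Step 1; else if $f(x_k+rd_m)\le f(x_k)-\epsilon/3$, set $x_{k+1}=x_k+rd_m$, $k=k+1$, $m=0$ and go to Step 1; otherwise set $r=r+R_\epsilon$ and repeat Step 2. Step 3: output any point of $\mathcal{X}\cap\overline{\mathcal{B}}(x_k,R_\epsilon)$.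 The points $x_k$ are the iteration points; the ''directional search at $x_k$'' is the line search of Step 2 along directions drawn while the current iteration point is $x_k$. *)

From HB Require Import structures.
From mathcomp Require Import all_boot all_order all_algebra.
From mathcomp Require Import all_classical all_reals all_analysis.
Set Implicit Arguments. Unset Strict Implicit. Unset Printing Implicit Defensive.
Import Order.TTheory GRing.Theory Num.Theory numFieldNormedType.Exports.
Local Open Scope ring_scope.
Local Open Scope classical_set_scope.

Section Defs.
Variables (R : realType) (N : nat).
Local Notation V := 'rV[R]_N.

Definition dotv (u v : V) : R := \sum_(i < N) u ord0 i * v ord0 i.
Definition enorm (u : V) : R := Num.sqrt (dotv u u).

Definition vangle (u v : V) : R := acos (dotv u v / (enorm u * enorm v)).

Definition convex_seg (X : set V) : Prop :=
  forall x y t, X x -> X y -> 0 <= t <= 1 -> X ((1 - t) *: x + t *: y).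

Definition is_diameter (X : set V) (D0 : R) : Prop :=
  (forall x y, X x -> X y -> enorm (x - y) <= D0) /\
  (forall e, 0 < e -> exists x y, [/\ X x, X y & D0 - e < enorm (x - y)]).

Definition XR (X : set V) (Rr : R) : set V :=
  [set x | exists s, X s /\ enorm (x - s) <= Rr].

Definition cball (c : V) (Rr : R) : set V := [set y | enorm (y - c) <= Rr].

Definition standing_assumption (f : V -> R) (X : set V) (fstar eps Reps : R) :=
  forall x, XR X Reps x -> f x <= fstar + eps ->
    forall y, cball x Reps y -> XR X Reps y -> f y <= f x + eps / 3.

Definition Xstar (f : V -> R) (X : set V) (fstar eps Reps : R) : set V :=
  [set x | XR X Reps x /\ f x <= fstar + 2 * eps / 3].

(* Step 2 of DFDS at the iteration point xk along direction d: the trial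
   points are xk + (j*Reps) d, j = 1, 2, ...; the search along d succeeds at
   y when y is the first trial point that is not rejected, and it satisfies
   the decrease test (all earlier trial points stay in X_R and fail the test). *)
Definition dir_search_finds (f : V -> R) (X : set V) (eps Reps : R)
    (xk d y : V) : Prop :=
  exists j : nat, [/\ (0 < j)%N,
    y = xk + (j%:R * Reps) *: d,
    XR X Reps y, f y <= f xk - eps / 3 &
    forall i : nat, (0 < i < j)%N ->
      XR X Reps (xk + (i%:R * Reps) *: d) /\
      f xk - eps / 3 < f (xk + (i%:R * Reps) *: d)].

End Defs.

(* On the ball of radius R_eps around x* the standing assumption gives
   f <= f* + eps/3, whereas f xk > f* + 2 eps/3; hence ||x* - xk|| > R_eps and
   sin alpha = sqrt 3 R_eps / (2 ||x* - xk||) < sqrt 3 / 2.  For a unit d with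
   angle(x* - xk, d) <= alpha, the centre x* lies at distance at most
   ||x* - xk|| sin alpha = (sqrt 3 / 2) R_eps from the line xk + t d, so the
   line meets the ball in a chord of half-length at least R_eps / 2, at t >= 0.
   A chord of length >= R_eps contains a trial point xk + j R_eps d with j >= 1,
   where the decrease test succeeds; the earlier trial points lie on the
   segment from xk to it, inside the convex set X_R, so the search is not cut
   off before. *)

From HB Require Import structures.
From mathcomp Require Import all_boot all_order all_algebra.
From mathcomp Require Import all_classical all_reals all_analysis.
From mathcomp Require Import ring lra.
Set Implicit Arguments. Unset Strict Implicit. Unset Printing Implicit Defensive.
Import Order.TTheory GRing.Theory Num.Theory numFieldNormedType.Exports.
Local Open Scope ring_scope.

Section Trigonometry.
Variable R : realType.
Implicit Types x y : R.

Lemma cos_pi3 : cos (pi / 3) = 1 / 2 :> R.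
Proof.
have pi_gt0 := pi_gt0 R.
have c_gt0 : 0 < cos (pi / 3 : R) by apply: cos_gt0_pihalf; apply/andP; split; lra.
have twice : (pi / 3) *+ 2 = pi - pi / 3 :> R by rewrite -mulr_natr; field.
have : cos ((pi / 3) *+ 2) = - cos (pi / 3 : R) by rewrite twice cosB cospi sinpi; ring.
rewrite cos_mulr2n; nra.
Qed.

Lemma sin_pi3 : sin (pi / 3) = Num.sqrt 3 / 2 :> R.
Proof.
have pi_gt0 := pi_gt0 R.
have s_gt0 : 0 < sin (pi / 3 : R) by apply: sin_gt0_pi; apply/andP; split; lra.
have s_sqr : sin (pi / 3 : R) ^+ 2 = 3 / 4 by rewrite sin2cos2 cos_pi3; field.
have r_sqr : (Num.sqrt 3 / 2 : R) ^+ 2 = 3 / 4 by rewrite expr_div_n sqr_sqrtr //; field.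
have r_ge0 : 0 <= Num.sqrt 3 / 2 :> R by rewrite divr_ge0 ?sqrtr_ge0.
apply/eqP; rewrite eq_le; apply/andP; split; nra.
Qed.

Lemma sqrt3_lt2 : Num.sqrt 3 < 2 :> R.
Proof. have := sqr_sqrtr (ler0n R 3); have := sqrtr_ge0 (3 : R); nra. Qed.

Lemma sqrt3_ratio_bounds (r l m : R) : 0 < r -> r < l -> l <= m ->
  Num.sqrt 3 * r / (2 * m) <= Num.sqrt 3 * r / (2 * l) < Num.sqrt 3 / 2.
Proof.
move=> r_gt0 rl lm; have sqrt3_gt0 : 0 < Num.sqrt 3 :> R by rewrite sqrtr_gt0.
have l_gt0 : 0 < l by lra.
apply/andP; split.
  by rewrite ler_pM2l ?mulr_gt0 // lef_pV2 ?posrE ?mulr_gt0 //; lra.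
rewrite ltr_pdivrMr ?mulr_gt0 //.
have -> : Num.sqrt 3 / 2 * (2 * l) = Num.sqrt 3 * l by field.
by rewrite ltr_pM2l.
Qed.

Lemma asin_in_pihalf x : -1 <= x <= 1 -> asin x \in `[(- (pi / 2)), pi / 2].
Proof. by move=> x1; rewrite in_itv /= asin_geNpi2 // asin_lepi2. Qed.

Lemma ler_asin x y : -1 <= x <= 1 -> -1 <= y <= 1 -> (asin x <= asin y) = (x <= y).
Proof.
move=> x1 y1; rewrite !leNgt -ltr_sin ?asin_in_pihalf //.
by rewrite !asinK // in_itv.
Qed.

Lemma asin_ge0 x : 0 <= x <= 1 -> 0 <= asin x.
Proof.
have pi_gt0 := pi_gt0 R; move=> /andP[x_ge0 x_le1].
have asin0 : asin 0 = 0 :> R by rewrite -{1}sin0 sinK // in_itv /=; lra.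
by rewrite -asin0 ler_asin //; apply/andP; split; lra.
Qed.

Lemma asin_lt_pi3 x : -1 <= x -> x < Num.sqrt 3 / 2 -> asin x < pi / 3.
Proof.
move=> x_geN1 x_lt; have pi_gt0 := pi_gt0 R; have s3_lt2 := sqrt3_lt2.
have x1 : -1 <= x <= 1 by apply/andP; split; lra.
rewrite -ltr_sin ?asin_in_pihalf // ?in_itv /= ?sin_pi3 ?asinK ?in_itv //.
apply/andP; split; lra.
Qed.

Lemma cos_le_of_acos_le x y : -1 <= x <= 1 -> 0 <= y <= pi -> acos x <= y -> cos y <= x.
Proof.
move=> x1 y_pi; rewrite !leNgt; apply: contra => cos_lt.
rewrite -ltr_cos ?acosK ?in_itv //= ?acos_ge0 ?acos_lepi //.
Qed.

End Trigonometry.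

Section Euclid.
Variables (R : realType) (N : nat).
Local Notation V := 'rV[R]_N.
Implicit Types (u v w : V) (k : R).

Lemma dotvC u v : dotv u v = dotv v u.
Proof. by apply: eq_bigr => i _; rewrite mulrC. Qed.

Lemma dotvDl u w v : dotv (u + w) v = dotv u v + dotv w v.
Proof. by rewrite /dotv -big_split; apply: eq_bigr => i _; rewrite mxE mulrDl. Qed.

Lemma dotvZl k u v : dotv (k *: u) v = k * dotv u v.
Proof. by rewrite /dotv mulr_sumr; apply: eq_bigr => i _; rewrite mxE mulrA. Qed.

Lemma dotvNl u v : dotv (- u) v = - dotv u v.
Proof. by rewrite -scaleN1r dotvZl mulN1r. Qed.

Lemma dotvDr u v w : dotv u (v + w) = dotv u v + dotv u w.
Proof. by rewrite dotvC dotvDl !(dotvC u). Qed.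

Lemma dotvZr k u v : dotv u (k *: v) = k * dotv u v.
Proof. by rewrite dotvC dotvZl dotvC. Qed.

Lemma dotvNr u v : dotv u (- v) = - dotv u v.
Proof. by rewrite dotvC dotvNl dotvC. Qed.

Lemma dotvDD u v : dotv (u + v) (u + v) = dotv u u + 2 * dotv u v + dotv v v.
Proof. rewrite dotvDl !dotvDr (dotvC v u); ring. Qed.

Lemma dotvBB u v : dotv (u - v) (u - v) = dotv u u - 2 * dotv u v + dotv v v.
Proof. rewrite dotvDD dotvNl dotvNr dotvNr opprK; ring. Qed.

Lemma dotvv_ge0 v : 0 <= dotv v v.
Proof. by apply: sumr_ge0 => i _; rewrite -expr2 sqr_ge0. Qed.

Lemma dotvv_eq0 v : dotv v v = 0 -> v = 0.
Proof.
move=> /eqP; rewrite psumr_eq0 => [/allP vv0|i _]; last by rewrite -expr2 sqr_ge0.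
apply/rowP => i; rewrite mxE.
by have := vv0 i (mem_index_enum i); rewrite mulf_eq0 orbb => /eqP.
Qed.

Lemma dotv_sqr_le u v : dotv u v ^+ 2 <= dotv u u * dotv v v.
Proof.
have [/dotvv_eq0 ->|vv_neq0] := eqVneq (dotv v v) 0.
  by rewrite -(scale0r (0 : V)) dotvZr dotvZl !mul0r expr0n mulr0.
have vv_gt0 : 0 < dotv v v by rewrite lt_def vv_neq0 dotvv_ge0.
have := dotvv_ge0 (u - (dotv u v / dotv v v) *: v).
rewrite dotvBB dotvZr dotvZl dotvZr -(pmulr_rge0 _ vv_gt0).
suff -> : dotv v v * (dotv u u - 2 * (dotv u v / dotv v v * dotv u v)
    + dotv u v / dotv v v * (dotv u v / dotv v v * dotv v v))
  = dotv u u * dotv v v - dotv u v ^+ 2 by rewrite subr_ge0.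
by field.
Qed.

Lemma enorm_ge0 v : 0 <= enorm v.
Proof. exact: sqrtr_ge0. Qed.

Lemma enorm0 : enorm (0 : V) = 0.
Proof. by rewrite /enorm /dotv big1 ?sqrtr0 // => i _; rewrite mxE mul0r. Qed.

Lemma sqr_enorm v : enorm v ^+ 2 = dotv v v.
Proof. by rewrite sqr_sqrtr // dotvv_ge0. Qed.

Lemma enorm_le v k : 0 <= k -> (enorm v <= k) = (dotv v v <= k ^+ 2).
Proof. by move=> k_ge0; rewrite -sqr_enorm ler_pXn2r // ?nnegrE ?enorm_ge0. Qed.

Lemma enormZ k v : enorm (k *: v) = `|k| * enorm v.
Proof.
by rewrite /enorm dotvZl dotvZr mulrA -expr2 sqrtrM ?sqr_ge0 // sqrtr_sqr.
Qed.

Lemma enormN v : enorm (- v) = enorm v.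
Proof. by rewrite -scaleN1r enormZ normrN normr1 mul1r. Qed.

Lemma enormBC u v : enorm (u - v) = enorm (v - u).
Proof. by rewrite -opprB enormN. Qed.

Lemma dotv_le u v : dotv u v <= enorm u * enorm v.
Proof.
have := dotv_sqr_le u v; rewrite -!sqr_enorm -exprMn.
have := mulr_ge0 (enorm_ge0 u) (enorm_ge0 v); nra.
Qed.

Lemma norm_dotv_le u v : `|dotv u v| <= enorm u * enorm v.
Proof.
rewrite ler_norml dotv_le andbT lerNl.
by have := dotv_le (- u) v; rewrite dotvNl enormN.
Qed.

Lemma enormD_le u v : enorm (u + v) <= enorm u + enorm v.
Proof.
rewrite enorm_le ?addr_ge0 ?enorm_ge0 // dotvDD sqrrD !sqr_enorm.
have := dotv_le u v; lra.
Qed.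

End Euclid.

Section Geometry.
Variables (R : realType) (N : nat).
Local Notation V := 'rV[R]_N.
Implicit Types x c d : V.

Lemma cball_line x c d r t : enorm d = 1 -> 0 <= r ->
  cball c r (x + t *: d) <->
  (t - dotv (c - x) d) ^+ 2 <= dotv (c - x) d ^+ 2 - enorm (c - x) ^+ 2 + r ^+ 2.
Proof.
move=> d1 r_ge0; rewrite /cball /= enorm_le //.
have dd : dotv d d = 1 by rewrite -sqr_enorm d1 expr1n.
have -> : x + t *: d - c = t *: d - (c - x) by rewrite opprB addrAC addrC.
rewrite dotvBB dotvZl dotvZr dotvZl dd (dotvC d) sqr_enorm.
by split => h; lra.
Qed.

Lemma ray_cball_chord x c d r : enorm d = 1 -> 0 <= r ->
  r <= enorm (c - x) -> 0 <= dotv (c - x) d ->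
  4 * (enorm (c - x) ^+ 2 - dotv (c - x) d ^+ 2) <= 3 * r ^+ 2 ->
  exists a b, [/\ 0 <= a, a + r <= b &
    forall t, (0 <= t /\ cball c r (x + t *: d)) <-> a <= t <= b].
Proof.
move=> d1 r_ge0 r_le p_ge0 dist_le.
set p := dotv (c - x) d in p_ge0 dist_le *; set L := enorm (c - x) in r_le dist_le *.
have disc_ge0 : 0 <= p ^+ 2 - L ^+ 2 + r ^+ 2 by nra.
set h := Num.sqrt (p ^+ 2 - L ^+ 2 + r ^+ 2).
have h_ge0 : 0 <= h := sqrtr_ge0 _.
have h_sqr : h ^+ 2 = p ^+ 2 - L ^+ 2 + r ^+ 2 by rewrite sqr_sqrtr.
exists (p - h), (p + h); split; [nra | nra | move=> t].
rewrite cball_line // -/p -/L -h_sqr; split=> [[_ th] | /andP[t_ge t_le]].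
  by apply/andP; split; nra.
by split; nra.
Qed.

Lemma dotv_ge_of_vangle_le (u d : V) y : enorm d = 1 -> 0 < enorm u ->
  0 <= y <= pi -> vangle u d <= y -> enorm u * cos y <= dotv u d.
Proof.
move=> d1 u_gt0 y_pi; rewrite /vangle d1 mulr1 => angle_le.
have : `|dotv u d| <= enorm u by have := norm_dotv_le u d; rewrite d1 mulr1.
rewrite ler_norml => /andP[p_ge p_le].
have p1 : -1 <= dotv u d / enorm u <= 1.
  by rewrite ler_pdivlMr // ler_pdivrMr //; apply/andP; split; lra.
by rewrite mulrC -ler_pdivlMr //; apply: cos_le_of_acos_le.
Qed.

Lemma ray_cball_chord_of_vangle x c d r : enorm d = 1 -> 0 <= r ->
  r < enorm (c - x) ->
  vangle (c - x) d <= asin (Num.sqrt 3 * r / (2 * enorm (c - x))) ->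
  exists a b, [/\ 0 <= a, a + r <= b &
    forall t, (0 <= t /\ cball c r (x + t *: d)) <-> a <= t <= b].
Proof.
move=> d1 r_ge0 r_lt angle_le.
set L := enorm (c - x) in r_lt angle_le *; set s := Num.sqrt 3 * r / (2 * L) in angle_le.
have L_gt0 : 0 < L by lra.
have sqrt3_ge0 : 0 <= Num.sqrt 3 :> R := sqrtr_ge0 _.
have sqrt3_sqr : Num.sqrt 3 ^+ 2 = 3 :> R by rewrite sqr_sqrtr.
have sL : s * L = Num.sqrt 3 * r / 2 by rewrite /s; field; lra.
have s_ge0 : 0 <= s by rewrite /s divr_ge0 ?mulr_ge0 //; lra.
have s_le : s <= Num.sqrt 3 / 2.
  by rewrite -(ler_pM2r L_gt0) sL; nra.
have s_le1 : s <= 1 by have := @sqrt3_lt2 R; lra.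
have s1 : -1 <= s <= 1 by apply/andP; split; lra.
have pi_gt0 := pi_gt0 R.
have asin_pi : 0 <= asin s <= pi.
  by rewrite asin_ge0 ?s_ge0 //=; have := asin_lepi2 s1; lra.
have := dotv_ge_of_vangle_le d1 L_gt0 asin_pi angle_le.
rewrite cos_asin // -/L => p_ge.
set q := Num.sqrt (1 - s ^+ 2) in p_ge.
have q_ge0 : 0 <= q := sqrtr_ge0 _.
have q_sqr : q ^+ 2 = 1 - s ^+ 2 by rewrite sqr_sqrtr // subr_ge0; nra.
apply: ray_cball_chord => //; rewrite -/L; first lra.
  exact: le_trans (mulr_ge0 (ltW L_gt0) q_ge0) p_ge.
have Lq_sqr : (L * q) ^+ 2 = L ^+ 2 - 3 / 4 * r ^+ 2.
  by rewrite exprMn q_sqr mulrBr mulr1 -exprMn mulrC sL expr_div_n exprMn sqrt3_sqr; field.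
have : (L * q) ^+ 2 <= dotv (c - x) d ^+ 2.
  by have := mulr_ge0 (ltW L_gt0) q_ge0; nra.
lra.
Qed.

End Geometry.

Local Open Scope classical_set_scope.

Section SearchRegion.
Variables (R : realType) (N : nat).
Local Notation V := 'rV[R]_N.
Implicit Types (x c d v : V) (X C : set V).

Lemma convex_seg_XR X r : convex_seg X -> convex_seg (XR X r).
Proof.
move=> X_convex x y l [s1 [Xs1 xs1]] [s2 [Xs2 ys2]] /andP[l_ge0 l_le1].
exists ((1 - l) *: s1 + l *: s2); split; first by apply: X_convex => //; rewrite l_ge0.
have -> : (1 - l) *: x + l *: y - ((1 - l) *: s1 + l *: s2)
    = (1 - l) *: (x - s1) + l *: (y - s2).
  by rewrite !scalerBr opprD addrACA.
apply: le_trans (enormD_le _ _) _.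
rewrite !enormZ !ger0_norm ?subr_ge0 //.
have -> : r = (1 - l) * r + l * r by ring.
by apply: lerD; apply: ler_wpM2l => //; rewrite subr_ge0.
Qed.

Lemma convex_seg_ray C x v l : convex_seg C -> C x -> C (x + v) ->
  0 <= l <= 1 -> C (x + l *: v).
Proof.
move=> C_convex Cx Cxv l01.
have -> : x + l *: v = (1 - l) *: x + l *: (x + v).
  by rewrite scalerDr addrA -scalerDl subrK scale1r.
exact: C_convex.
Qed.

Lemma cball_sub_XR X c r : X c -> cball c r `<=` XR X r.
Proof. by move=> Xc y cy; exists c. Qed.

Lemma enorm_sub_XR_le X D0 r x y : is_diameter X D0 -> X x -> XR X r y ->
  enorm (x - y) <= D0 + r.
Proof.
move=> [diam _] Xx [s [Xs ys]].
rewrite -(subrK s x) -addrA; apply: le_trans (enormD_le _ _) _.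
by apply: lerD; [exact: diam | rewrite enormBC].
Qed.

Lemma exists_natmul_in_itv (a b h : R) : 0 < h -> 0 <= a -> a + h <= b ->
  exists j : nat, (0 < j)%N /\ a <= j%:R * h <= b.
Proof.
move=> h_gt0 a_ge0 ab; have := truncn_itv (divr_ge0 a_ge0 (ltW h_gt0)).
rewrite ler_pdivlMr // ltr_pdivrMr // => /andP[ja aj].
exists (Num.truncn (a / h)).+1; split => //.
by apply/andP; split; rewrite ?(ltW aj) // mulrSr mulrDl mul1r; lra.
Qed.

Lemma dir_search_finds_of_decrease (f : V -> R) X eps Reps xk d j :
  convex_seg X -> XR X Reps xk -> (0 < j)%N ->
  XR X Reps (xk + (j%:R * Reps) *: d) ->
  f (xk + (j%:R * Reps) *: d) <= f xk - eps / 3 ->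
  exists y, dir_search_finds f X eps Reps xk d y.
Proof.
move=> X_convex XR_xk j_gt0 XR_xj f_xj.
have XR_before i : (i <= j)%N -> XR X Reps (xk + (i%:R * Reps) *: d).
  move=> ij; have j_neq0 : j%:R != 0 :> R by rewrite pnatr_eq0 -lt0n.
  rewrite (_ : (i%:R * Reps) *: d = (i%:R / j%:R) *: ((j%:R * Reps) *: d)).
    apply: convex_seg_ray (convex_seg_XR X_convex) XR_xk XR_xj _.
    by rewrite divr_ge0 ?ler0n //= ler_pdivrMr ?ltr0n // mul1r ler_nat.
  by rewrite scalerA mulrA divfK.
pose decrease i := (0 < i)%N && (f (xk + (i%:R * Reps) *: d) <= f xk - eps / 3).
have [|i /andP[i_gt0 f_xi] i_min] := ex_minnP (ex_intro decrease j _).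
  by rewrite /decrease j_gt0 f_xj.
have ij : (i <= j)%N by apply: i_min; rewrite /decrease j_gt0 f_xj.
exists (xk + (i%:R * Reps) *: d), i; split => // [|k /andP[k_gt0 ki]].
  exact: XR_before.
split; first by apply: XR_before; rewrite ltnW // (leq_trans ki).
rewrite ltNge; apply/negP => f_xk'.
by have := i_min k; rewrite /decrease k_gt0 f_xk' leqNgt ki => /(_ isT).
Qed.

End SearchRegion.

Theorem lemma3 (R : realType) (N : nat) (f : 'rV[R]_N -> R) (X : set 'rV[R]_N)
  (D0 eps Reps : R) (xstar xk : 'rV[R]_N) :
  {within XR X Reps, continuous f} ->
  compact X -> convex_seg X -> is_diameter X D0 ->
  0 < eps -> 0 < Reps ->
  X xstar -> (forall x, X x -> f xstar <= f x) ->
  standing_assumption f X (f xstar) eps Reps ->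
  XR X Reps xk -> ~ Xstar f X (f xstar) eps Reps xk ->
  let alpha := asin (Num.sqrt 3 * Reps / (2 * enorm (xstar - xk))) in
  [/\ Reps < enorm (xstar - xk),
      (* part 1 *)
      Num.sqrt 3 * Reps / (2 * (D0 + Reps)) <= sin alpha < Num.sqrt 3 / 2
      /\ asin (Num.sqrt 3 * Reps / (2 * (D0 + Reps))) <= alpha < pi / 3,
      (* part 2 *)
      (forall d, enorm d = 1 -> vangle (xstar - xk) d <= alpha ->
         exists a b : R, [/\ 0 <= a, a + Reps <= b &
           forall t, (0 <= t /\ cball xstar Reps (xk + t *: d)) <-> a <= t <= b])
    & (* part 3 *)
      (forall d, enorm d = 1 -> vangle (xstar - xk) d <= alpha ->
         exists y, dir_search_finds f X eps Reps xk d y)].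
Proof.
move=> _ _ X_convex X_diam eps_gt0 Reps_gt0 X_xstar _ SA XR_xk xk_notin alpha.
have XR_xstar : XR X Reps xstar.
  by apply: (cball_sub_XR X_xstar); rewrite /cball /= subrr enorm0 ltW.
have ball_bound y : cball xstar Reps y -> f y <= f xstar + eps / 3.
  by move=> y_in; apply: SA y_in (cball_sub_XR X_xstar y_in) => //; lra.
have f_xk : f xstar + 2 * eps / 3 < f xk.
  by rewrite ltNge; apply/negP => f_xk; apply: xk_notin.
have L_gt : Reps < enorm (xstar - xk).
  rewrite ltNge; apply/negP => L_le.
  by have := ball_bound xk; rewrite /cball /= enormBC => /(_ L_le); lra.
have L_le := enorm_sub_XR_le X_diam X_xstar XR_xk.
have /andP[sA_le s_lt] := sqrt3_ratio_bounds Reps_gt0 L_gt L_le.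
set sA := Num.sqrt 3 * Reps / (2 * (D0 + Reps)) in sA_le *.
set s := Num.sqrt 3 * Reps / (2 * enorm (xstar - xk)) in sA_le s_lt.
have sA_ge0 : 0 <= sA by rewrite divr_ge0 ?mulr_ge0 ?sqrtr_ge0 //; lra.
have s_lt1 : s < 1 by have := @sqrt3_lt2 R; lra.
have s1 : -1 <= s <= 1 by apply/andP; split; lra.
have sA1 : -1 <= sA <= 1 by apply/andP; split; lra.
split => //.
- rewrite /alpha -/s asinK ?in_itv // ler_asin // sA_le s_lt asin_lt_pi3 //.
  by case/andP: s1.
- by move=> d d1; apply: ray_cball_chord_of_vangle d1 (ltW Reps_gt0) L_gt.
- move=> d d1 angle_le.
  have [a [b [a_ge0 ab ray]]] :=
    ray_cball_chord_of_vangle d1 (ltW Reps_gt0) L_gt angle_le.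
  have [j [j_gt0 /(ray _).2 [_ y_in]]] := exists_natmul_in_itv Reps_gt0 a_ge0 ab.
  apply: dir_search_finds_of_decrease X_convex XR_xk j_gt0 (cball_sub_XR X_xstar y_in) _.
  by have := ball_bound _ y_in; lra.
Qed.
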